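(* Let $T$ be a $C_{p^rq^s}$-transfer system with exactly two connected components. If the connected component of $(0,0)$ equals $H_k$ for some $0<k<s$, or equals $V_\ell$ for some $0<\ell<r$, then $T$ is not lesser simply paired.
   Context: $p,q$ are distinct primes and $r,s\ge 0$ integers. The subgroups of $C_{p^rq^s}$ are identified with grid points $(i,j)$, $0\le i\le r$, $0\le j\le s$, where $(i,j)$ stands for $C_{p^iq^j}$ (intersection is coordinatewise minimum). A $C_{p^rq^s}$-transfer system is a partial order $\to$ on these vertices such that: $(i_1,j_1)\to(i_2,j_2)$ implies $i_1\le i_2$, $j_1\le j_2$; it is reflexive and transitive; and $(i_1,j_1)\to(i_2,j_2)$ implies $(\min\{i_1,a\},\min\{j_1,b\})\to(\min\{i_2,a\},\min\{j_2,b\})$ for every vertex $(a,b)$. Connected components are those of the underlying undirected graph. $V_\ell=\{(i,j): 0\le i\le \ell,\ 0\le j\le s\}$, $H_k=\{(i,j): 0\le i\le r,\ 0\le j\le k\}$. A transfer system is saturated if whenever $L\le K\le H$ and $L\to H$ is in it then $K\to H$ is in it; $\mathrm{Hull}(T)$ is the smallest saturated transfer system containing $T$; $T_c$ is the complete transfer system. A pair $(T,T')$ is compatible if $T\subseteq T'$ and for all subgroups $A,B,C$ with $B,C\le A$: if $B\to A$ is in $T$ and $B\cap C\to B$ is in $T'$ then $C\to A$ is in $T'$. $T$ is lesser simply paired if for every transfer system $T'\supseteq T$, $(T,T')$ is compatible iff $T'\in\{\mathrm{Hull}(T),T_c\}$. *)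

From mathcomp Require Import all_boot.
From Stdlib Require Import Relations.
Set Implicit Arguments. Unset Strict Implicit. Unset Printing Implicit Defensive.

(* Subgroups of C_{p^r q^s} are grid points (i,j) : nat * nat with i <= r, j <= s;
   (i,j) stands for C_{p^i q^j}. *)
Definition vert (r s : nat) (x : nat * nat) : Prop := (x.1 <= r) /\ (x.2 <= s).

Definition sub2 (x y : nat * nat) : Prop := (x.1 <= y.1) /\ (x.2 <= y.2).

Definition meet2 (x y : nat * nat) : nat * nat := (minn x.1 y.1, minn x.2 y.2).

Definition gridrel := nat * nat -> nat * nat -> Prop.

Record transfer_system (r s : nat) (T : gridrel) : Prop := {
  ts_support : forall x y, T x y -> vert r s x /\ vert r s y;
  ts_sub : forall x y, T x y -> sub2 x y;
  ts_refl : forall x, vert r s x -> T x x;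
  ts_trans : forall x y z, T x y -> T y z -> T x z;
  ts_restr : forall x y z, T x y -> vert r s z -> T (meet2 x z) (meet2 y z)
}.

Definition subrel (T T' : gridrel) : Prop := forall x y, T x y -> T' x y.
Definition releq (T T' : gridrel) : Prop := forall x y, T x y <-> T' x y.

Definition saturated (r s : nat) (T : gridrel) : Prop :=
  forall L K H, vert r s L -> vert r s K -> vert r s H ->
    sub2 L K -> sub2 K H -> T L H -> T K H.

Definition Hull (r s : nat) (T : gridrel) : gridrel := fun x y =>
  forall S : gridrel, transfer_system r s S -> saturated r s S -> subrel T S -> S x y.

Definition Tc (r s : nat) : gridrel := fun x y => vert r s x /\ vert r s y /\ sub2 x y.

Definition compatible (r s : nat) (T T' : gridrel) : Prop :=
  subrel T T' /\
  forall A B C, vert r s A -> vert r s B -> vert r s C ->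
    sub2 B A -> sub2 C A -> T B A -> T' (meet2 B C) B -> T' C A.

Definition lesser_simply_paired (r s : nat) (T : gridrel) : Prop :=
  forall T' : gridrel, transfer_system r s T' -> subrel T T' ->
    (compatible r s T T' <-> (releq T' (Hull r s T) \/ releq T' (Tc r s))).

Definition connected (T : gridrel) : gridrel :=
  clos_refl_trans (nat * nat) (fun x y => T x y \/ T y x).

Definition two_components (r s : nat) (T : gridrel) : Prop :=
  exists u v, vert r s u /\ vert r s v /\ ~ connected T u v /\
    forall w, vert r s w -> connected T u w \/ connected T v w.

Definition comp00_is (r s : nat) (T : gridrel) (P : nat * nat -> Prop) : Prop :=
  forall w, vert r s w -> (connected T (0, 0) w <-> P w).

Definition Hset (k : nat) : nat * nat -> Prop := fun w => w.2 <= k.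
Definition Vset (l : nat) : nat * nat -> Prop := fun w => w.1 <= l.

From Pilot Require Import Defs.
From Stdlib Require Import Relations Lia.
From mathcomp Require Import all_boot.
From mathcomp Require Import zify.

(* Let [f] be one of the two coordinates, so that the component of (0,0) is the
   lower block [f <= k].  Let [cut false] be the complete transfer system on each
   of the two blocks [f <= k] and [f > k], where transfers from the lower to the
   upper block are forbidden; it is saturated and contains [T], hence contains
   [Hull T].  Adding to it all transfers out of the bottom row [f = 0] gives
   [cut true], a transfer system compatible with [T].  It contains the edge from
   (0,0) to the top of the upper block, which [Hull T] does not, and it misses
   the edge from a point at level 1 to that top, which [Tc] has. *)

Lemma vert_meet2 r s x z : vert r s x -> vert r s (meet2 x z).
Proof. rewrite /vert /meet2 /=; lia. Qed.

Lemma sub2_meet2 x y z : sub2 x y -> sub2 (meet2 x z) (meet2 y z).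
Proof. rewrite /sub2 /meet2 /=; lia. Qed.

Section Cut.
Variables (r s k : nat) (f : nat * nat -> nat).
Hypothesis f_meet : forall x y, f (meet2 x y) = minn (f x) (f y).
Hypothesis f_mono : forall x y, sub2 x y -> f x <= f y.

Definition cut (ground : bool) : gridrel := fun x y =>
  [/\ vert r s x, vert r s y, sub2 x y &
      (ground /\ f x = 0) \/ k < f x \/ f y <= k].

Lemma cut_transfer_system ground : transfer_system r s (cut ground).
Proof.
split.
- by move=> x y [].
- by move=> x y [].
- by move=> x Hx; split=> //; rewrite /sub2; lia.
- move=> x y w [Hx _ Sxy Dxy] [_ Hw Syw Dyw].
  have := f_mono _ _ Sxy; have := f_mono _ _ Syw.
  split=> //; first by move: Sxy Syw; rewrite /sub2; lia.
  case: Dxy => [[g0 x0]|[xk|yk]]; first by left.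
  + by right; left; lia.
  + by case: Dyw => [[g0 y0]|[yk'|wk]]; [left; split=> //; lia | lia | right; right; lia].
- move=> x y w [Hx Hy Sxy Dxy] Hw; have := f_mono _ _ Sxy.
  split; [exact: vert_meet2 | exact: vert_meet2 | exact: sub2_meet2 |].
  rewrite !f_meet; case: Dxy => [[g0 x0]|[xk|yk]]; first by left; split=> //; lia.
  + by case: (leqP (f w) k); right; [right | left]; lia.
  + by right; right; lia.
Qed.

Lemma cut_saturated : saturated r s (cut false).
Proof.
move=> L K H _ HK HH SLK SKH [_ _ _ D]; have := f_mono _ _ SLK.
split=> //; case: D => [[//]|[Lk|Hk]]; right; [left | right]; lia.
Qed.

Variable T : gridrel.
Hypothesis T_ts : transfer_system r s T.
Hypothesis T_comp00 : comp00_is r s T (fun w => f w <= k).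

Lemma transfer_level_block x y : T x y -> (f x <= k <-> f y <= k).
Proof.
move=> Txy; have [Hx Hy] := ts_support T_ts Txy.
rewrite -(T_comp00 _ Hx) -(T_comp00 _ Hy); split=> C0.
- by apply: rt_trans C0 _; apply: rt_step; left.
- by apply: rt_trans C0 _; apply: rt_step; right.
Qed.

Lemma subrel_cut ground : Defs.subrel T (cut ground).
Proof.
move=> x y Txy; have [Hx Hy] := ts_support T_ts Txy.
have := transfer_level_block _ _ Txy.
split=> //; first exact: ts_sub T_ts _ _ Txy.
by right; case: (leqP (f x) k) => ?; [right; tauto | left].
Qed.

Lemma compatible_cut_ground : compatible r s T (cut true).
Proof.
split; first exact: subrel_cut.
move=> A B C HA _ HC _ SCA TBA [_ _ _ D].
have BA := transfer_level_block _ _ TBA.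
split=> //; rewrite f_meet in D.
case: (leqP (f A) k) => Ak; first by right; right.
have Bk : k < f B by case: (leqP (f B) k) => // /BA; lia.
by case: D => [[_ D]|[D|D]]; [left; split=> //; lia | right; left; lia | lia].
Qed.

Lemma Hull_sub_cut : Defs.subrel (Hull r s T) (cut false).
Proof.
by move=> x y /(_ (cut false) (cut_transfer_system false) cut_saturated
               (subrel_cut false)).
Qed.

Lemma cut_not_lesser_simply_paired z x y :
  vert r s z -> vert r s x -> vert r s y -> sub2 z y -> sub2 x y ->
  f z = 0 -> 0 < f x -> f x <= k -> k < f y -> ~ lesser_simply_paired r s T.
Proof.
move=> Hz Hx Hy Szy Sxy fz x_pos xk ky LSP.
have [compat_eq _] := LSP _ (cut_transfer_system true) (subrel_cut true).
case: (compat_eq compatible_cut_ground) => [toHull | toTc].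
- have /toHull/Hull_sub_cut[_ _ _] : cut true z y by split=> //; left.
  case=> [[//]|]; lia.
- have /toTc[_ _ _] : Tc r s x y by [].
  case=> [[_]|]; lia.
Qed.

End Cut.

Theorem mainTheorem14 (p q r s : nat) (T : gridrel) :
  prime p -> prime q -> p != q ->
  transfer_system r s T ->
  two_components r s T ->
  ((exists k, 0 < k < s /\ comp00_is r s T (Hset k)) \/
   (exists l, 0 < l < r /\ comp00_is r s T (Vset l))) ->
  ~ lesser_simply_paired r s T.
Proof.
move=> _ _ _ T_ts _ [[k [/andP[k_pos ks] comp00]] | [l [/andP[l_pos lr] comp00]]].
- apply: (@cut_not_lesser_simply_paired r s k snd _ _ T T_ts comp00
            (0, 0) (0, 1) (0, s)); rewrite /vert /sub2 //=; lia.
- apply: (@cut_not_lesser_simply_paired r s l fst _ _ T T_ts comp00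
            (0, 0) (1, 0) (r, 0)); rewrite /vert /sub2 //=; lia.
Qed.
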